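(* Let $n>m>0$ be integers and let $\nu\in\mathbb{N}^3$ with $|\nu|=n$. Then $$\sum_{\substack{\mu\in\mathbb{N}^3,\ |\mu|=m\\ \mu\le\nu}} P_\mu(q)\,P_{\nu-\mu}(q)=\binom{n}{m}P_\nu(q)\qquad\text{for all }q\in\mathbb{H},$$ where $\mu\le\nu$ means componentwise inequality.
   Context: Quaternions are written $q=t+e_1x_1+e_2x_2+e_3x_3$ with $e_1=i,e_2=j,e_3=k$. For $\nu=(n_1,n_2,n_3)\in\mathbb{N}^3$ put $|\nu|=n_1+n_2+n_3$. Define $z_j(q)=t e_j-x_j$ for $j=1,2,3$. For $|\nu|=n\ge1$ let $I_\nu$ be the set of $n$-tuples $(i_1,\dots,i_n)\in\{1,2,3\}^n$ in which the value $j$ occurs exactly $n_j$ times, and set $P_\nu(q)=\frac{1}{n!}\sum_{(i_1,\dots,i_n)\in I_\nu} z_{i_1}(q)z_{i_2}(q)\cdots z_{i_n}(q)$ (quaternion products in the indicated order); $P_{(0,0,0)}=1$. *)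

(* Real quaternions over an arbitrary real field R
   (the paper's H is the case R = the real numbers). *)
From HB Require Import structures.
From mathcomp Require Import all_boot all_order all_algebra.
Set Implicit Arguments. Unset Strict Implicit. Unset Printing Implicit Defensive.
Import Order.TTheory GRing.Theory Num.Theory.
Local Open Scope ring_scope.

Section Quaternions.
Variable R : realFieldType.

Record quat := Quat { qt : R; qx1 : R; qx2 : R; qx3 : R }.

Definition quat2tuple (q : quat) := (qt q, qx1 q, qx2 q, qx3 q).
Definition tuple2quat (p : R * R * R * R) :=
  let: (a, b, c, d) := p in Quat a b c d.
Lemma quat2tupleK : cancel quat2tuple tuple2quat. Proof. by case. Qed.

HB.instance Definition _ := Equality.copy quat (can_type quat2tupleK).
HB.instance Definition _ := Choice.copy quat (can_type quat2tupleK).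

Definition qzero := Quat 0 0 0 0.
Definition qopp q := Quat (- qt q) (- qx1 q) (- qx2 q) (- qx3 q).
Definition qadd p q :=
  Quat (qt p + qt q) (qx1 p + qx1 q) (qx2 p + qx2 q) (qx3 p + qx3 q).

Lemma qaddA : associative qadd.
Proof. by move=> [? ? ? ?] [? ? ? ?] [? ? ? ?]; rewrite /qadd /= !addrA. Qed.
Lemma qaddC : commutative qadd.
Proof. by move=> [a b c d] [a' b' c' d']; rewrite /qadd /= (addrC a) (addrC b)
  (addrC c) (addrC d). Qed.
Lemma qadd0 : left_id qzero qadd.
Proof. by move=> [? ? ? ?]; rewrite /qadd /= !add0r. Qed.
Lemma qaddN : left_inverse qzero qopp qadd.
Proof. by move=> [? ? ? ?]; rewrite /qadd /= !addNr. Qed.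

HB.instance Definition _ := GRing.isZmodule.Build quat qaddA qaddC qadd0 qaddN.

(* Hamilton product, with e1 = i, e2 = j, e3 = k *)
Definition qmul p q :=
  Quat (qt p * qt q - qx1 p * qx1 q - qx2 p * qx2 q - qx3 p * qx3 q)
       (qt p * qx1 q + qx1 p * qt q + qx2 p * qx3 q - qx3 p * qx2 q)
       (qt p * qx2 q - qx1 p * qx3 q + qx2 p * qt q + qx3 p * qx1 q)
       (qt p * qx3 q + qx1 p * qx2 q - qx2 p * qx1 q + qx3 p * qt q).

Definition qone := Quat 1 0 0 0.

Definition qscale (c : R) q := Quat (c * qt q) (c * qx1 q) (c * qx2 q) (c * qx3 q).

Definition qreal (c : R) := Quat c 0 0 0.

(* imaginary units e_1, e_2, e_3, indexed by j : 'I_3 (index 0 is e_1) *)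
Definition qe (j : 'I_3) : quat :=
  Quat 0 (if val j == 0%N then 1 else 0) (if val j == 1%N then 1 else 0)
         (if val j == 2%N then 1 else 0).

(* the coordinate x_j of q, j : 'I_3 (index 0 is x_1) *)
Definition qcoord (q : quat) (j : 'I_3) : R :=
  if val j == 0%N then qx1 q else if val j == 1%N then qx2 q else qx3 q.

Definition zq (j : 'I_3) (q : quat) : quat :=
  qscale (qt q) (qe j) - qreal (qcoord q j).

Definition zprod (s : seq 'I_3) (q : quat) : quat :=
  foldr (fun j acc => qmul (zq j q) acc) qone s.

(* multi-indices nu in N^3 are functions 'I_3 -> nat; |nu| = sum of entries *)
Definition mabs (nu : 'I_3 -> nat) : nat := (\sum_(j < 3) nu j)%N.

(* P_nu(q) = 1/n! * sum over n-tuples in which j occurs exactly nu_j times.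
   For nu = 0 this is the empty product 1, i.e. P_0 = 1. *)
Definition Pnu (nu : 'I_3 -> nat) (q : quat) : quat :=
  qscale ((mabs nu)`!%:R)^-1
    (\sum_(s : (mabs nu).-tuple 'I_3 | [forall j, count_mem j s == nu j])
        zprod s q).

End Quaternions.

From HB Require Import structures.
From mathcomp Require Import all_boot all_order all_algebra.
From mathcomp Require Import ring.
Set Implicit Arguments. Unset Strict Implicit. Unset Printing Implicit Defensive.
Import Order.TTheory GRing.Theory Num.Theory.
Local Open Scope ring_scope.

(* n! P_nu(q) is the sum, over the words s of length n with letter counts nu,
   of the ordered products z_s(q).  Cutting a word of length n after its m-th
   letter splits it into a word of length m with some counts mu <= nu and a
   word of length n - m with counts nu - mu, and the product of the whole
   word is the product of the two pieces.  Hence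
   n! P_nu = sum_mu (m! P_mu) ((n - m)! P_(nu - mu)), which is the identity
   after dividing by m! (n - m)!. *)

Section LetterCounts.
Variable I : finType.

Lemma sum_count_mem (s : seq I) : (\sum_i count_mem i s)%N = size s.
Proof.
elim: s => [|x s IHs]; first by rewrite big1.
rewrite /= big_split /= IHs (bigD1 x) //= eqxx big1 ?add1n // => i /negbTE.
by rewrite eq_sym => ->.
Qed.

Lemma sum_tuple_cat (V : nmodType) a b (P : pred (seq I)) (F : seq I -> V) :
  \sum_(s : (a + b).-tuple I | P s) F s =
  \sum_(x : a.-tuple I) \sum_(y : b.-tuple I | P (x ++ y)) F (x ++ y).
Proof.
pose split_tuple (s : (a + b).-tuple I) :=
  (tcast (minn_idPl (leq_addr b a)) (take_tuple a s),
   tcast (addKn a b) (drop_tuple a s)).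
rewrite pair_big_dep.
rewrite (reindex (fun p : a.-tuple I * b.-tuple I => cat_tuple p.1 p.2)) //.
exists split_tuple => [[x y] _ | s _].
  rewrite /split_tuple; congr pair; apply: val_inj; rewrite /=.
    by rewrite val_tcast /= take_size_cat ?size_tuple.
  by rewrite (val_tcast (addKn a b)) /= drop_size_cat ?size_tuple.
by apply: val_inj; rewrite /= val_tcast (val_tcast (addKn a b)) cat_take_drop.
Qed.

Lemma count_mem_cat_eq (x y : seq I) (nu : I -> nat) :
    (forall i, count_mem i x <= nu i)%N ->
  [forall i, count_mem i (x ++ y) == nu i] =
  [forall i, count_mem i y == nu i - count_mem i x]%N.
Proof.
move=> le_x_nu; apply/forallP/forallP => eq_xy i; move: (eq_xy i).
  by rewrite count_cat => /eqP <-; rewrite addKn.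
by rewrite count_cat => /eqP ->; rewrite subnKC.
Qed.

Definition count_vec N (s : seq I) : {ffun I -> 'I_N.+1} :=
  [ffun i => inord (count_mem i s)].

Lemma count_vecE N (s : seq I) i :
  (size s <= N)%N -> val (count_vec N s i) = count_mem i s.
Proof.
by move=> le_s_N; rewrite ffunE /= inordK // ltnS (leq_trans (count_size _ _)).
Qed.

End LetterCounts.

Section WordSums.
Variables (I : finType) (A : pzRingType) (z : I -> A).

Definition word_sum k (nu : I -> nat) : A :=
  \sum_(s : k.-tuple I | [forall i, count_mem i s == nu i]) \prod_(i <- s) z i.

Lemma word_sum_cat a b N (nu : I -> nat) : (a <= N)%N ->
  word_sum (a + b) nu =
  \sum_(mu : {ffun I -> 'I_N.+1}
          | [forall i, (val (mu i) <= nu i)%N] && ((\sum_i val (mu i))%N == a))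
     word_sum a (fun i => val (mu i)) * word_sum b (fun i => (nu i - val (mu i))%N).
Proof.
move=> le_a_N; have cvE (x : a.-tuple I) i : val (count_vec N x i) = count_mem i x.
  by rewrite count_vecE ?size_tuple.
rewrite /word_sum (sum_tuple_cat a b (fun s => [forall i, count_mem i s == nu i])
  (fun s => \prod_(i <- s) z i)).
under eq_bigr do under eq_bigr do rewrite big_cat.
rewrite (bigID (fun x : a.-tuple I => [forall i, count_mem i x <= nu i]%N)) /=.
rewrite [X in _ + X]big1 ?addr0 => [|x /forallPn [i lt_nu_x]]; last first.
  rewrite big_pred0 // => y; apply/negbTE/forallP => /(_ i) /eqP.
  by rewrite count_cat => eq_nu; rewrite -eq_nu leq_addr in lt_nu_x.
rewrite (partition_big (fun x : a.-tuple I => count_vec N x)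
  (fun mu : {ffun I -> 'I_N.+1} =>
     [forall i, (val (mu i) <= nu i)%N] && ((\sum_i val (mu i))%N == a))) /=;
  last first.
  move=> x /forallP le_x_nu; apply/andP; split.
    by apply/forallP => i; rewrite cvE.
  by under eq_bigr do rewrite cvE; rewrite sum_count_mem size_tuple.
apply: eq_bigr => mu /andP [/forallP le_mu_nu _].
rewrite mulr_suml; apply: eq_big => [x | x /andP [_ /eqP x_mu]].
  apply/andP/forallP => [[_ /eqP <- i] | eq_mu]; first by rewrite cvE.
  split; first by apply/forallP => i; rewrite (eqP (eq_mu i)).
  by apply/eqP/ffunP => i; apply: val_inj; rewrite cvE; apply/eqP.
have cnt_x i : count_mem i x = val (mu i) by rewrite -x_mu cvE.
rewrite mulr_sumr; apply: eq_bigl => y.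
rewrite count_mem_cat_eq => [|i]; last by rewrite cnt_x le_mu_nu.
by under eq_forallb do rewrite cnt_x.
Qed.

End WordSums.

Section QuaternionAlgebra.
Variable R : realFieldType.

Lemma quatP (p q : quat R) : qt p = qt q -> qx1 p = qx1 q -> qx2 p = qx2 q ->
  qx3 p = qx3 q -> p = q.
Proof. by case: p => ????; case: q => ???? /= -> -> -> ->. Qed.

Lemma qmulA : associative (@qmul R).
Proof. by move=> [????] [????] [????]; apply: quatP; rewrite /=; ring. Qed.
Lemma qmul1q : left_id (@qone R) (@qmul R).
Proof. by move=> [????]; apply: quatP; rewrite /=; ring. Qed.
Lemma qmulq1 : right_id (@qone R) (@qmul R).
Proof. by move=> [????]; apply: quatP; rewrite /=; ring. Qed.
Lemma qmulDl : left_distributive (@qmul R) +%R.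
Proof. by move=> [????] [????] [????]; apply: quatP; rewrite /=; ring. Qed.
Lemma qmulDr : right_distributive (@qmul R) +%R.
Proof. by move=> [????] [????] [????]; apply: quatP; rewrite /=; ring. Qed.
Lemma qone_neq0 : @qone R != 0.
Proof. by apply/eqP => /(congr1 (@qt R)) /= /eqP; rewrite oner_eq0. Qed.

Lemma qscaleA a b (q : quat R) : qscale a (qscale b q) = qscale (a * b) q.
Proof. by apply: quatP; rewrite /=; ring. Qed.
Lemma qscale1 : left_id 1 (@qscale R).
Proof. by move=> q; apply: quatP; rewrite /=; ring. Qed.
Lemma qscaleDr : right_distributive (@qscale R) +%R.
Proof. by move=> a p q; apply: quatP; rewrite /=; ring. Qed.
Lemma qscaleDl (q : quat R) : {morph (@qscale R)^~ q : a b / a + b}.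
Proof. by move=> a b; apply: quatP; rewrite /=; ring. Qed.
Lemma qscaleAl a (p q : quat R) : qscale a (qmul p q) = qmul (qscale a p) q.
Proof. by apply: quatP; rewrite /=; ring. Qed.
Lemma qscaleAr a (p q : quat R) : qscale a (qmul p q) = qmul p (qscale a q).
Proof. by apply: quatP; rewrite /=; ring. Qed.

End QuaternionAlgebra.

HB.instance Definition _ (R : realFieldType) :=
  GRing.Zmodule_isNzRing.Build (quat R) (@qmulA R) (@qmul1q R) (@qmulq1 R)
    (@qmulDl R) (@qmulDr R) (@qone_neq0 R).
HB.instance Definition _ (R : realFieldType) :=
  GRing.Zmodule_isLmodule.Build R (quat R) (@qscaleA R) (@qscale1 R)
    (@qscaleDr R) (@qscaleDl R).
HB.instance Definition _ (R : realFieldType) :=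
  GRing.Lmodule_isLalgebra.Build R (quat R) (@qscaleAl R).
HB.instance Definition _ (R : realFieldType) :=
  GRing.Lalgebra_isAlgebra.Build R (quat R) (@qscaleAr R).

Lemma mabs_sub (mu nu : 'I_3 -> nat) : (forall j, mu j <= nu j)%N ->
  mabs (fun j => nu j - mu j)%N = (mabs nu - mabs mu)%N.
Proof. by move=> le_mu_nu; rewrite /mabs sumnB. Qed.

Section Pnu.
Variables (R : realFieldType) (q : quat R).
Let z j := zq j q.

Lemma zprodE (s : seq 'I_3) : zprod s q = \prod_(j <- s) z j.
Proof. by elim: s => [|j s IHs]; rewrite ?big_nil ?big_cons //= IHs. Qed.

Lemma Pnu_word_sum (nu : 'I_3 -> nat) :
  Pnu nu q = (mabs nu)`!%:R^-1 *: word_sum z (mabs nu) nu.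
Proof. by rewrite /Pnu /word_sum; under eq_bigr do rewrite zprodE. Qed.

Lemma Pnu_mul_word_sum (mu nu : 'I_3 -> nat) : (forall j, mu j <= nu j)%N ->
  qmul (Pnu mu q) (Pnu (fun j => nu j - mu j)%N q) =
  ((mabs mu)`!%:R^-1 * (mabs nu - mabs mu)`!%:R^-1) *:
    (word_sum z (mabs mu) mu *
     word_sum z (mabs nu - mabs mu) (fun j => nu j - mu j)%N).
Proof.
move=> le_mu_nu; rewrite -[qmul _ _]/(_ * _ : quat R) !Pnu_word_sum mabs_sub //.
by rewrite -scalerAl -scalerAr scalerA.
Qed.

End Pnu.

Lemma inv_fact_mul_binomial (F : numFieldType) n m : (m <= n)%N ->
  m`!%:R^-1 * (n - m)`!%:R^-1 = 'C(n, m)%:R * n`!%:R^-1 :> F.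
Proof.
move=> le_mn; rewrite -(bin_fact le_mn) !natrM.
have fact_neq0 k : k`!%:R != 0 :> F by rewrite pnatr_eq0 -lt0n fact_gt0.
have bin_neq0 : 'C(n, m)%:R != 0 :> F by rewrite pnatr_eq0 -lt0n bin_gt0.
by field; rewrite !fact_neq0 bin_neq0.
Qed.

Theorem mainTheorem1 (R : realFieldType) (n m : nat) (nu : 'I_3 -> nat)
  (hm : (0 < m)%N) (hmn : (m < n)%N) (hnu : mabs nu = n) (q : quat R) :
  \sum_(mu : {ffun 'I_3 -> 'I_n.+1}
          | [forall j, (val (mu j) <= nu j)%N] && (mabs (fun j => val (mu j)) == m))
     qmul (Pnu (fun j => val (mu j)) q) (Pnu (fun j => (nu j - val (mu j))%N) q)
  = qscale ('C(n, m))%:R (Pnu nu q).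
Proof.
have le_mn : (m <= n)%N by apply: ltnW.
under eq_bigr => mu /andP [/forallP le_mu_nu /eqP mu_m]
  do rewrite Pnu_mul_word_sum // mu_m hnu.
rewrite -scaler_sumr -(word_sum_cat _ (n - m) nu le_mn) subnKC //.
rewrite inv_fact_mul_binomial // Pnu_word_sum hnu.
by rewrite -[qscale _ _]/(_ *: _ : quat R) scalerA.
Qed.
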